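(* Let $(E,\mathscr{T},\le)$ be a locally compact $T_2$-preordered Tychonoff space with $G(\le)=\bigcap_{f\in\mathcal{F}}G_f$, and let $\mathcal{H}_1\subseteq\mathcal{H}_2\subseteq\mathcal{F}$ with $G(\le)=\bigcap_{h\in\mathcal{H}_1}G_h$. Then the $\mathcal{H}_2$-compactification dominates the $\mathcal{H}_1$-compactification.
   Context: $T_2$-preordered: the graph $G(\le)=\{(x,y):x\le y\}$ is closed in $E\times E$. $\mathcal{F}$ is the family of continuous isotone functions $f:E\to[0,1]$; $G_f=\{(x,y):f(x)\le f(y)\}$. $\mathcal{C}$ is the family of continuous functions $E\to[0,1]$ constant outside a compact set. For $\mathcal{H}\subseteq\mathcal{F}$ with $G(\le)=\bigcap_{h\in\mathcal{H}}G_h$, the $\mathcal{H}$-compactification is $c:E\to[0,1]^{\mathcal{H}\cup\mathcal{C}}$, $c(x)=(g(x))_{g\in\mathcal{H}\cup\mathcal{C}}$, with $cE$ the closure of $c(E)$ with the induced product topology and preorder $x\le_c y$ iff $x_h\le y_h$ for all $h\in\mathcal{H}$. For preorder compactifications $c_1,c_2$ of $E$, $c_2$ dominates $c_1$ if there is a continuous isotone map $C:c_2E\to c_1E$ with $C\circ c_2=c_1$. *)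

From HB Require Import structures.
From mathcomp Require Import all_boot all_order all_algebra.
From mathcomp Require Import all_classical all_reals all_analysis.
Unset Printing Implicit Defensive.
Import Order.TTheory GRing.Theory Num.Theory numFieldNormedType.Exports.
Local Open Scope classical_set_scope.
Local Open Scope ring_scope.

Section Defs.
Context {R : realType} {E : topologicalType}.

Definition graph_rel (le : E -> E -> Prop) : set (E * E) :=
  [set p | le p.1 p.2].

Definition Gf (f : E -> R) : set (E * E) := [set p | f p.1 <= f p.2].

Definition isotone (le : E -> E -> Prop) (f : E -> R) :=
  forall x y, le x y -> f x <= f y.

Definition unit_valued (f : E -> R) := forall x, 0 <= f x <= 1.

Definition Fam (le : E -> E -> Prop) : set (E -> R) :=
  [set f | continuous (f : E -> R) /\ isotone le f /\ unit_valued f].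

Definition Cfam : set (E -> R) :=
  [set g | continuous (g : E -> R) /\ unit_valued g /\
     exists K : set E, compact K /\ exists c : R, forall x, ~ K x -> g x = c].

(* index set H ∪ C of the H-compactification *)
Definition cidx (H : set (E -> R)) : Type := {g : E -> R | (H `|` Cfam) g}.

(* the embedding c : E -> [0,1]^(H ∪ C) (product topology) *)
Definition cmap (H : set (E -> R)) : E -> {ptws cidx H -> R} :=
  fun x i => (proj1_sig i) x.

Definition cE (H : set (E -> R)) : set {ptws cidx H -> R} :=
  closure (range (cmap H)).

Definition le_c (H : set (E -> R)) (x y : {ptws cidx H -> R}) :=
  forall i : cidx H, H (proj1_sig i) -> x i <= y i.

Definition dominates (H2 H1 : set (E -> R)) :=
  exists C : {ptws cidx H2 -> R} -> {ptws cidx H1 -> R},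
    [/\ (forall x, cE H2 x -> cE H1 (C x)),
        {within cE H2, continuous C},
        (forall x y, cE H2 x -> cE H2 y -> le_c H2 x y -> le_c H1 (C x) (C y))
      & (forall e : E, C (cmap H2 e) = cmap H1 e)].

End Defs.

(* The coordinates of the H1-compactification are among those of the
   H2-compactification, so forgetting the extra coordinates is the required
   map: it is continuous for the product topologies, sends c_2 E onto c_1 E and
   hence its closure into the closure, and is isotone because every h in H1 is
   in H2. *)
From HB Require Import structures.
From mathcomp Require Import all_boot all_order all_algebra.
From mathcomp Require Import all_classical all_reals all_analysis.
Import Order.TTheory GRing.Theory Num.Theory numFieldNormedType.Exports.
Local Open Scope classical_set_scope.
Local Open Scope ring_scope.

(* [pointwise_cvgP] in the library requires a topological index type. *)
Lemma ptws_cvgP {U : Type} {V : topologicalType}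
    (F : set_system {ptws U -> V}) (f : {ptws U -> V}) :
  Filter F -> F --> f <-> forall u, (fun g : {ptws U -> V} => g u) @ F --> f u.
Proof.
move=> FF; rewrite cvg_sup; split.
  move=> + u => /(_ u).
  rewrite cvg_image; last by rewrite eqEsubset; split=> v // _; exists (cst v).
  apply: cvg_trans => W /=; rewrite ?nbhs_simpl /fmap /= => [[W' + <-]].
  by apply: filterS => g W'g /=; exists g.
move=> + u => /(_ u).
rewrite cvg_image; last by rewrite eqEsubset; split=> v // _; exists (cst v).
move=> + W //=; rewrite ?nbhs_simpl => Q => /Q Q'; exists (@^~ u @^-1` W) => //.
by rewrite eqEsubset; split => [j [? + <-//]|j Wj]; exists (fun _ => j).
Qed.

Lemma ptws_precomp_continuous (V : topologicalType) (A B : Type) (j : B -> A) :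
  continuous (fun x : {ptws A -> V} => (x \o j : {ptws B -> V})).
Proof.
move=> x; have /ptws_cvgP coord_cvg : nbhs x --> x := cvg_id.
by apply/ptws_cvgP => [|b]; [exact/fmap_filter/nbhs_filter|exact: coord_cvg (j b)].
Qed.

Lemma continuous_closure_image (S T : topologicalType) (f : S -> T) (A : set S) :
  continuous f -> f @` closure A `<=` closure (f @` A).
Proof.
move=> fc _ [x Ax <-] B nB.
have [a [Aa Bfa]] := Ax _ (fc x B nB).
by exists (f a); split => //; exists a.
Qed.

Section Restriction.
Context {R : realType} {E : topologicalType} (H1 H2 : set (E -> R)).
Hypothesis H12 : H1 `<=` H2.

Definition cidx_incl (i : cidx H1) : cidx H2 :=
  exist _ (sval i) (setSU H12 (svalP i)).

Definition restrict_coords (x : {ptws cidx H2 -> R}) : {ptws cidx H1 -> R} :=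
  x \o cidx_incl.

Lemma restrict_coords_continuous : continuous restrict_coords.
Proof. exact: ptws_precomp_continuous. Qed.

Lemma restrict_coords_cmap (e : E) : restrict_coords (cmap H2 e) = cmap H1 e.
Proof. by []. Qed.

Lemma restrict_coords_cE x : cE H2 x -> cE H1 (restrict_coords x).
Proof.
move=> cx; rewrite /cE.
have -> : range (cmap H1) = restrict_coords @` range (cmap H2) by rewrite image_comp.
by apply: continuous_closure_image; [exact: restrict_coords_continuous|exists x].
Qed.

Lemma restrict_coords_le_c x y :
  le_c H2 x y -> le_c H1 (restrict_coords x) (restrict_coords y).
Proof. by move=> lxy i H1i; apply: lxy; exact: H12. Qed.

Lemma dominates_subset : dominates H2 H1.
Proof.
exists restrict_coords; split.
- exact: restrict_coords_cE.
- exact/continuous_subspaceT/restrict_coords_continuous.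
- by move=> x y _ _; exact: restrict_coords_le_c.
- exact: restrict_coords_cmap.
Qed.

End Restriction.

Theorem mainTheorem13 (R : realType) (E : topologicalType)
  (le : E -> E -> Prop) (H1 H2 : set (E -> R)) :
  (forall x, le x x) ->
  (forall x y z, le x y -> le y z -> le x z) ->
  closed (graph_rel le) ->
  hausdorff_space E ->
  completely_regular_space E ->
  locally_compact [set: E] ->
  graph_rel le = \bigcap_(f in Fam (R:=R) le) Gf f ->
  H1 `<=` H2 -> H2 `<=` Fam (R:=R) le ->
  graph_rel le = \bigcap_(h in H1) Gf h ->
  dominates H2 H1.
Proof. by move=> _ _ _ _ _ _ _ H12 _ _; exact: dominates_subset. Qed.
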